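(* Suppose $p_{XY}$ has full support on $\mathcal{X}\times\mathcal{Y}$, and let $p(u,x,y,z)=p_{XY}(x,y)p_{Z|XY}(z|x,y)p(u|x,y,z)$ be a joint p.m.f. (with $U$ on a finite set $\mathcal{U}$) satisfying the Markov chains $U-X-Y$, $Z-(U,Y)-X$ and $U-(Y,Z)-X$. For $y\in\mathcal{Y}$ and $i\in[k(y)]$ let $\mathcal{U}_i^{(y)}=\{u\in\mathcal{U}: p(u,z|y)>0\text{ for some }z\in\mathcal{Z}_i^{(y)}\}$. Then for any $y,y'\in\mathcal{Y}$, $i\in[k(y)]$, $j\in[k(y')]$: if $\vec\alpha_i^{(y)}\neq\vec\alpha_j^{(y')}$, then $\mathcal{U}_i^{(y)}\cap\mathcal{U}_j^{(y')}=\emptyset$.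
   Context: $\mathcal{X},\mathcal{Y},\mathcal{Z}$ are finite. For $y\in\mathcal{Y}$ let $\mathcal{Z}^{(y)}=\{z\in\mathcal{Z}:\exists x,\ p_{Z|XY}(z|x,y)>0\}$. For $z,z'\in\mathcal{Z}^{(y)}$, write $z\equiv_y z'$ if the column vectors $(p_{Z|XY}(z|x,y))_{x\in\mathcal{X}}$ and $(p_{Z|XY}(z'|x,y))_{x\in\mathcal{X}}$ are positive scalar multiples of each other; this is an equivalence relation partitioning $\mathcal{Z}^{(y)}=\mathcal{Z}_1^{(y)}\uplus\cdots\uplus\mathcal{Z}_{k(y)}^{(y)}$. For each class, the $|\mathcal{X}|\times|\mathcal{Z}_i^{(y)}|$ matrix $A_i^{(y)}(x,z)=p_{Z|XY}(z|x,y)$ is rank one and can be uniquely written as $A_i^{(y)}(x,z)=\vec\alpha_i^{(y)}(x)\vec\gamma_i^{(y)}(z)$ with $\vec\alpha_i^{(y)}$ a probability vector on $\mathcal{X}$ (nonnegative entries summing to one). $[k]=\{1,\dots,k\}$. *)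

From HB Require Import structures.
From mathcomp Require Import all_boot all_order all_algebra.
Set Implicit Arguments. Unset Strict Implicit. Unset Printing Implicit Defensive.
Import Order.TTheory GRing.Theory Num.Theory.
Local Open Scope ring_scope.

Section Defs.
Variables (R : realFieldType) (X Y Z U : finType).
(* pXY x y = p_{XY}(x,y); pZ x y z = p_{Z|XY}(z|x,y); pU x y z u = p(u|x,y,z) *)
Variables (pXY : X -> Y -> R) (pZ : X -> Y -> Z -> R) (pU : X -> Y -> Z -> U -> R).

Definition joint (u : U) (x : X) (y : Y) (z : Z) : R := pXY x y * pZ x y z * pU x y z u.

Definition pX x := \sum_u \sum_y \sum_z joint u x y z.
Definition pY y := \sum_u \sum_x \sum_z joint u x y z.
Definition pUX u x := \sum_y \sum_z joint u x y z.
Definition pXYm x y := \sum_u \sum_z joint u x y z.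
Definition pUY u y := \sum_x \sum_z joint u x y z.
Definition pYZ y z := \sum_u \sum_x joint u x y z.
Definition pUXY u x y := \sum_z joint u x y z.
Definition pUYZ u y z := \sum_x joint u x y z.
Definition pXYZ x y z := \sum_u joint u x y z.

Definition pUZ_given_Y u z y := pUYZ u y z / pY y.

(* Markov chains, in the standard form p(a,b,c) p(b) = p(a,b) p(b,c) *)
Definition markov_U_X_Y := forall u x y, pUXY u x y * pX x = pUX u x * pXYm x y.
Definition markov_Z_UY_X := forall u x y z,
  joint u x y z * pUY u y = pUYZ u y z * pUXY u x y.
Definition markov_U_YZ_X := forall u x y z,
  joint u x y z * pYZ y z = pUYZ u y z * pXYZ x y z.

Definition inZy (y : Y) (z : Z) : Prop := exists x, 0 < pZ x y z.

Definition zequiv (y : Y) (z z' : Z) : Prop :=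
  inZy y z /\ inZy y z' /\ exists c : R, 0 < c /\ forall x, pZ x y z = c * pZ x y z'.

(* U_i^{(y)} for the class i of z0 in Z^{(y)} *)
Definition Uclass (y : Y) (z0 : Z) (u : U) : Prop :=
  exists z, zequiv y z z0 /\ 0 < pUZ_given_Y u z y.

(* alpha is the (unique) probability vector in the rank-one factorization
   A(x,z) = alpha(x) gamma(z) of the class of z0 *)
Definition is_alpha (y : Y) (z0 : Z) (alpha : {ffun X -> R}) : Prop :=
  (forall x, 0 <= alpha x) /\ \sum_x alpha x = 1 /\
  exists gamma : Z -> R, forall x z, zequiv y z z0 -> pZ x y z = alpha x * gamma z.
End Defs.

(* If [u] lies in [U_i^(y)], witnessed by some [z] of the class with [p(u,y,z) > 0], the three
   Markov chains give [p(u,x) = c alpha_i^(y)(x) p(x)] for a constant [c > 0]. As [p(x) > 0] and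
   [alpha_i^(y)] sums to one, [alpha_i^(y)] is the normalisation of [x |-> p(u,x) / p(x)], which
   depends on [u] alone; two classes sharing [u] therefore have the same [alpha]. *)
From HB Require Import structures.
From mathcomp Require Import all_boot all_order all_algebra.
From mathcomp Require Import ring lra.
Import Order.TTheory GRing.Theory Num.Theory.
Local Open Scope ring_scope.
Set Implicit Arguments. Unset Strict Implicit.

Lemma ler_sum_term (R : numDomainType) (I : finType) (F : I -> R) i :
  (forall j, 0 <= F j) -> F i <= \sum_j F j.
Proof. by move=> F_ge0; rewrite (bigD1 i) //= lerDl sumr_ge0. Qed.

Lemma gt0_numer_of_divr_gt0 (R : numFieldType) (a b : R) :
  0 <= b -> 0 < a / b -> 0 < a.
Proof.
move=> b_ge0 ab_gt0.
have b_neq0 : b != 0 by apply: contraTneq ab_gt0 => ->; rewrite invr0 mulr0 ltxx.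
by rewrite -[a](divfK b_neq0) mulr_gt0 // lt_def b_neq0.
Qed.

(* The chains [U - X - Y], [Z - (U,Y) - X] and [U - (Y,Z) - X] written as [e1], [e2], [e3],
   with [pxyz = pxy * (al * g)], solved for [pux = p(u,x)]. *)
Lemma pUX_of_markov_identities (R : fieldType)
    (pux puxy px pxy puxyz puy puyz pyz al g : R) :
  pxy != 0 -> puyz != 0 -> pyz != 0 ->
  puxy * px = pux * pxy ->
  puxyz * puy = puyz * puxy ->
  puxyz * pyz = puyz * (pxy * (al * g)) ->
  pux = (puy * g / pyz) * (al * px).
Proof.
move=> pxy_neq0 puyz_neq0 pyz_neq0 e1 e2 e3.
have e : (pux * pyz) * (pxy * puyz) = (puy * g * al * px) * (pxy * puyz).
  transitivity (px * puy * (puxyz * pyz)); last by rewrite e3; ring.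
  transitivity (px * pyz * (puxyz * puy)); last by ring.
  rewrite e2; transitivity (pyz * puyz * (puxy * px)); last by ring.
  by rewrite e1; ring.
rewrite -[pux](mulfK pyz_neq0) (mulIf (mulf_neq0 pxy_neq0 puyz_neq0) e).
by field.
Qed.

Section MarkovChains.
Variables (R : realFieldType) (X Y Z U : finType).
Variables (pXY : X -> Y -> R) (pZ : X -> Y -> Z -> R) (pU : X -> Y -> Z -> U -> R).
Hypothesis pXY_gt0 : forall x y, 0 < pXY x y.
Hypothesis pZ_ge0 : forall x y z, 0 <= pZ x y z.
Hypothesis pZ_sum1 : forall x y, \sum_z pZ x y z = 1.
Hypothesis pU_ge0 : forall x y z u, 0 <= pU x y z u.
Hypothesis pU_sum1 : forall x y z, \sum_u pU x y z u = 1.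
Hypothesis markov1 : markov_U_X_Y pXY pZ pU.
Hypothesis markov2 : markov_Z_UY_X pXY pZ pU.
Hypothesis markov3 : markov_U_YZ_X pXY pZ pU.

Lemma joint_ge0 u x y z : 0 <= joint pXY pZ pU u x y z.
Proof. by rewrite /joint !mulr_ge0 // ltW. Qed.

Lemma pXYZE x y z : pXYZ pXY pZ pU x y z = pXY x y * pZ x y z.
Proof. by rewrite /pXYZ /joint -big_distrr /= pU_sum1 mulr1. Qed.

Lemma pXYmE x y : pXYm pXY pZ pU x y = pXY x y.
Proof.
rewrite /pXYm exchange_big /=.
under eq_bigr => z _ do rewrite -/(pXYZ pXY pZ pU x y z) pXYZE.
by rewrite -big_distrr /= pZ_sum1 mulr1.
Qed.

Lemma pX_gt0 x (y : Y) : 0 < pX pXY pZ pU x.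
Proof.
have -> : pX pXY pZ pU x = \sum_y pXY x y.
  by rewrite /pX exchange_big /=; apply: eq_bigr => y' _; rewrite -pXYmE.
apply: lt_le_trans (pXY_gt0 x y) _.
by apply: ler_sum_term => y'; apply: ltW.
Qed.

Lemma pY_ge0 y : 0 <= pY pXY pZ pU y.
Proof. by do 3 (apply: sumr_ge0 => ? _); apply: joint_ge0. Qed.

Lemma Uclass_pUYZ_gt0 y z0 u :
  Uclass pXY pZ pU y z0 u -> exists2 z, zequiv pZ y z z0 & 0 < pUYZ pXY pZ pU u y z.
Proof.
by move=> [z [z_z0 pz_gt0]]; exists z => //; apply: gt0_numer_of_divr_gt0 (pY_ge0 y) _.
Qed.

Lemma pUX_proportional_alpha u y z0 z (alpha : {ffun X -> R}) :
  is_alpha pZ y z0 alpha -> zequiv pZ y z z0 -> 0 < pUYZ pXY pZ pU u y z ->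
  exists2 c, 0 < c & forall x, pUX pXY pZ pU u x = c * (alpha x * pX pXY pZ pU x).
Proof.
move=> [alpha_ge0 [_ [g pZE]]] z_z0 puyz_gt0.
have g_gt0 : 0 < g z.
  have [[x1 pz1_gt0] _] := z_z0.
  move: pz1_gt0; rewrite (pZE _ _ z_z0); have := alpha_ge0 x1; nra.
have pyz_gt0 : 0 < pYZ pXY pZ pU y z.
  apply: lt_le_trans puyz_gt0 _.
  apply: (ler_sum_term u) => u'.
  by apply: sumr_ge0 => x _; apply: joint_ge0.
have puy_gt0 : 0 < pUY pXY pZ pU u y.
  apply: lt_le_trans puyz_gt0 _; apply: ler_sum => x _.
  exact: ler_sum_term (joint_ge0 u x y).
exists (pUY pXY pZ pU u y * g z / pYZ pXY pZ pU y z); first by rewrite !mulr_gt0 ?invr_gt0.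
move=> x; have e1 := markov1 u x y; have e3 := markov3 u x y z.
rewrite pXYmE in e1; rewrite pXYZE (pZE _ _ z_z0) in e3.
by apply: (pUX_of_markov_identities _ _ _ e1 (markov2 u x y z) e3); rewrite gt_eqF.
Qed.

Lemma alpha_of_Uclass y z0 u (alpha : {ffun X -> R}) x :
  Uclass pXY pZ pU y z0 u -> is_alpha pZ y z0 alpha ->
  alpha x = (pUX pXY pZ pU u x / pX pXY pZ pU x)
            / \sum_x' pUX pXY pZ pU u x' / pX pXY pZ pU x'.
Proof.
move=> /Uclass_pUYZ_gt0 [z z_z0 puyz_gt0] alpha_y.
have [c c_gt0 pUXE] := pUX_proportional_alpha alpha_y z_z0 puyz_gt0.
have likelihoodE x' : pUX pXY pZ pU u x' / pX pXY pZ pU x' = c * alpha x'.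
  by rewrite pUXE mulrA mulfK // gt_eqF // (pX_gt0 x' y).
have [_ [alpha_sum1 _]] := alpha_y.
under eq_bigr => x' _ do rewrite likelihoodE.
by rewrite likelihoodE -big_distrr /= alpha_sum1 mulr1 mulrC mulKf // gt_eqF.
Qed.

End MarkovChains.

Unset Implicit Arguments.

Theorem claim1 (R : realFieldType) (X Y Z U : finType)
  (pXY : X -> Y -> R) (pZ : X -> Y -> Z -> R) (pU : X -> Y -> Z -> U -> R)
  (hXYpos : forall x y, 0 < pXY x y)
  (hXYsum : \sum_x \sum_y pXY x y = 1)
  (hZnn : forall x y z, 0 <= pZ x y z)
  (hZsum : forall x y, \sum_z pZ x y z = 1)
  (hUnn : forall x y z u, 0 <= pU x y z u)
  (hUsum : forall x y z, \sum_u pU x y z u = 1)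
  (hM1 : markov_U_X_Y pXY pZ pU)
  (hM2 : markov_Z_UY_X pXY pZ pU)
  (hM3 : markov_U_YZ_X pXY pZ pU)
  (y y' : Y) (z0 z0' : Z)
  (hz0 : inZy pZ y z0) (hz0' : inZy pZ y' z0')
  (alpha alpha' : {ffun X -> R})
  (ha : is_alpha pZ y z0 alpha) (ha' : is_alpha pZ y' z0' alpha')
  (hne : alpha <> alpha') :
  forall u : U, ~ (Uclass pXY pZ pU y z0 u /\ Uclass pXY pZ pU y' z0' u).
Proof.
move=> u [u_y u_y']; apply: hne; apply/ffunP => x.
rewrite (alpha_of_Uclass hXYpos hZnn hZsum hUnn hUsum hM1 hM2 hM3 x u_y ha).
by rewrite (alpha_of_Uclass hXYpos hZnn hZsum hUnn hUsum hM1 hM2 hM3 x u_y' ha').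
Qed.
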